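(* For any linguistically well-formed {\bf MLL1} sequent $\vdash\Gamma$, its $\eta$-reduced and $\eta$-long translations are $\alpha\eta$-equivalent: $||\vdash\Gamma||_{\eta\to}\equiv_{\alpha\eta}||\vdash\Gamma||$.
   Context: {\bf MLL1} formulas are built from atoms $p(x_1,\ldots,x_n)$ by $\otimes$, par $\wp$, $\forall$, $\exists$. Each predicate symbol has a valency $(k,n-k)$ marking the first $k$ argument occurrences as left and the rest as right (polarity inherited in compound formulas); a sequent is linguistically well-formed if every quantifier binds exactly one left and one right occurrence and each free variable has exactly one left and one right free occurrence. Predicate symbols are identified with {\bf ETTC} literals of the same valencies. $\eta$-long translation: each variable $x$ gives two indices $x^l,x^r$; $||p(x_1,\ldots,x_n)||_{\eta\to}=p^{x^l_1\ldots x^l_k}_{x^r_{k+1}\ldots x^r_n}$, $\otimes,\wp$ and contexts translated homomorphically, $||\forall xA||_{\eta\to}=\nabla^{x^r}_{x^l}||A||_{\eta\to}$, $||\exists xA||_{\eta\to}=\triangle^{x^r}_{x^l}||A||_{\eta\to}$, $||\vdash\Gamma||_{\eta\to}=(\vdash\pi(\Gamma)::||\Gamma||_{\eta\to})$ with $\pi(\Gamma)=\prod_{x\in FV(\Gamma)}\delta^{x^r}_{x^l}$, $\delta^j_i=[\epsilon]^j_i$. $\eta$-reduced translation (defined up to $\alpha$-equivalence): variables are indices, left occurrences upper and right lower, $||p(x_1,\ldots,x_n)||=p^{x_1\ldots x_k}_{x_{k+1}\ldots x_n}$, $\otimes,\wp$ homomorphic, $||\forall xA||=\nabla^u_v||A||^{[v/x]}_{[u/x]}$,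 $||\exists xA||=\triangle^u_v||A||^{[v/x]}_{[u/x]}$ for suitable indices $u,v$, $||\vdash\Gamma||=(\vdash||\Gamma||)$ (term $1$). $\alpha$-equivalence of tensor sequents: renaming bound indices and consistently renaming free indices; $\eta$-equivalence: generated by $t::\Gamma\to_\eta\delta^i_jt::\Gamma^{[j/i]}$ and $t::\Gamma\to_\eta\delta^j_it::\Gamma_{[j/i]}$ ($j$ fresh) when $i$ has both a free upper and a free lower occurrence in $\Gamma$. *)

From Stdlib Require Import Relations List Permutation.
From mathcomp Require Import all_boot.

Set Implicit Arguments.
Unset Strict Implicit.
Unset Printing Implicit Defensive.

Definition var := nat.
Definition idx := nat.

(* P : predicate symbols; arity p = n, lval p = k, valency (k, n-k).        *)
Section MLL1.
Variables (P : eqType) (lval arity : P -> nat).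

Inductive form : Type :=
| Atom of P & seq var
| Tens of form & form
| Par of form & form
| All of var & form
| Ex of var & form.

Fixpoint lcount (x : var) (A : form) : nat :=
  match A with
  | Atom p args => count_mem x (take (lval p) args)
  | Tens A B | Par A B => lcount x A + lcount x B
  | All y A | Ex y A => if y == x then 0 else lcount x A
  end.

Fixpoint rcount (x : var) (A : form) : nat :=
  match A with
  | Atom p args => count_mem x (drop (lval p) args)
  | Tens A B | Par A B => rcount x A + rcount x B
  | All y A | Ex y A => if y == x then 0 else rcount x A
  end.

Fixpoint fv (A : form) : seq var :=
  match A with
  | Atom _ args => args
  | Tens A B | Par A B => fv A ++ fv B
  | All y A | Ex y A => [seq z <- fv A | z != y]
  end.

Definition fv_ctx (G : seq form) : seq var := undup (flatten (map fv G)).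
Definition lcount_ctx x (G : seq form) := sumn (map (lcount x) G).
Definition rcount_ctx x (G : seq form) := sumn (map (rcount x) G).

Fixpoint qwf (A : form) : bool :=
  match A with
  | Atom p args => size args == arity p
  | Tens A B | Par A B => qwf A && qwf B
  | All x A | Ex x A => [&& lcount x A == 1, rcount x A == 1 & qwf A]
  end.

Definition ling_wf (G : seq form) : Prop :=
  all qwf G /\
  forall x, x \in fv_ctx G -> lcount_ctx x G = 1 /\ rcount_ctx x G = 1.

End MLL1.

Section ETTC.
Variable P : eqType.

Inductive tsym : Type := Eps | TSym of nat.

Record elem : Type := Elem { esym : tsym; eup : seq idx; elo : seq idx }.

Definition delta (up lo : idx) : elem := Elem Eps [:: up] [:: lo].

(* tensor terms: products of elementary tensors (1 = empty product);
   products are commutative, handled by permutation in alpha-equivalence *)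
Definition tterm := seq elem.

Inductive tform : Type :=
| TLit of P & seq idx & seq idx
| TTensor of tform & tform
| TPar of tform & tform
| TNabla of idx & idx & tform          (* nabla^u_v A, binds u and v in A *)
| TTri of idx & idx & tform.           (* triangle^u_v A, binds u and v *)

Record tseq : Type := TSeq { tsterm : tterm; tsctx : seq tform }.

Fixpoint fup (i : idx) (A : tform) : nat :=
  match A with
  | TLit _ up _ => count_mem i up
  | TTensor A B | TPar A B => fup i A + fup i B
  | TNabla u v A | TTri u v A => if (i == u) || (i == v) then 0 else fup i A
  end.

Fixpoint flo (i : idx) (A : tform) : nat :=
  match A with
  | TLit _ _ lo => count_mem i lo
  | TTensor A B | TPar A B => flo i A + flo i B
  | TNabla u v A | TTri u v A => if (i == u) || (i == v) then 0 else flo i A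
  end.

Fixpoint occurs (i : idx) (A : tform) : bool :=
  match A with
  | TLit _ up lo => (i \in up) || (i \in lo)
  | TTensor A B | TPar A B => occurs i A || occurs i B
  | TNabla u v A | TTri u v A => [|| i == u, i == v | occurs i A]
  end.

Definition occurs_elem (i : idx) (e : elem) : bool := (i \in eup e) || (i \in elo e).

Definition occurs_seq (i : idx) (S : tseq) : bool :=
  has (occurs_elem i) (tsterm S) || has (occurs i) (tsctx S).

Definition ren (j i k : idx) : idx := if k == i then j else k.

Fixpoint sub_up (j i : idx) (A : tform) : tform :=
  match A with
  | TLit p up lo => TLit p (map (ren j i) up) lo
  | TTensor A B => TTensor (sub_up j i A) (sub_up j i B)
  | TPar A B => TPar (sub_up j i A) (sub_up j i B)
  | TNabla u v A => TNabla u v (if (i == u) || (i == v) then A else sub_up j i A)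
  | TTri u v A => TTri u v (if (i == u) || (i == v) then A else sub_up j i A)
  end.

Fixpoint sub_lo (j i : idx) (A : tform) : tform :=
  match A with
  | TLit p up lo => TLit p up (map (ren j i) lo)
  | TTensor A B => TTensor (sub_lo j i A) (sub_lo j i B)
  | TPar A B => TPar (sub_lo j i A) (sub_lo j i B)
  | TNabla u v A => TNabla u v (if (i == u) || (i == v) then A else sub_lo j i A)
  | TTri u v A => TTri u v (if (i == u) || (i == v) then A else sub_lo j i A)
  end.

(* alpha-equivalence: env = stack of pairs of corresponding bound indices,
   s = renaming applied to free indices *)
Fixpoint ilookup (env : seq (idx * idx)) (s : idx -> idx) (i j : idx) : bool :=
  match env with
  | [::] => j == s i
  | (a, b) :: env' =>
      if (a == i) && (b == j) then true
      else if (a == i) || (b == j) then false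
      else ilookup env' s i j
  end.

Fixpoint aeq (env : seq (idx * idx)) (s : idx -> idx) (A B : tform) : bool :=
  match A, B with
  | TLit p up lo, TLit q up' lo' =>
      [&& p == q, all2 (ilookup env s) up up' & all2 (ilookup env s) lo lo']
  | TTensor A1 A2, TTensor B1 B2 => aeq env s A1 B1 && aeq env s A2 B2
  | TPar A1 A2, TPar B1 B2 => aeq env s A1 B1 && aeq env s A2 B2
  | TNabla u v A, TNabla u' v' B => aeq ((u, u') :: (v, v') :: env) s A B
  | TTri u v A, TTri u' v' B => aeq ((u, u') :: (v, v') :: env) s A B
  | _, _ => false
  end.

Definition ren_elem (s : idx -> idx) (e : elem) : elem :=
  Elem (esym e) (map s (eup e)) (map s (elo e)).

(* alpha-equivalence of tensor sequents: renaming bound indices and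
   consistently (injectively) renaming free indices; the tensor term is a
   commutative product (taken up to permutation of its factors) *)
Definition tseq_alpha (S1 S2 : tseq) : Prop :=
  exists s : idx -> idx, injective s /\
    Permutation (map (ren_elem s) (tsterm S1)) (tsterm S2) /\
    all2 (aeq [::] s) (tsctx S1) (tsctx S2).

Definition fup_ctx i (G : seq tform) := sumn (map (fup i) G).
Definition flo_ctx i (G : seq tform) := sumn (map (flo i) G).

Inductive eta_step : tseq -> tseq -> Prop :=
| eta_up (t : tterm) (G : seq tform) (i j : idx) :
    0 < fup_ctx i G -> 0 < flo_ctx i G -> ~~ occurs_seq j (TSeq t G) ->
    eta_step (TSeq t G) (TSeq (delta i j :: t) (map (sub_up j i) G))
| eta_lo (t : tterm) (G : seq tform) (i j : idx) :
    0 < fup_ctx i G -> 0 < flo_ctx i G -> ~~ occurs_seq j (TSeq t G) ->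
    eta_step (TSeq t G) (TSeq (delta j i :: t) (map (sub_lo j i) G)).

Definition alpha_eta_equiv : tseq -> tseq -> Prop :=
  clos_refl_sym_trans tseq (fun S1 S2 => tseq_alpha S1 S2 \/ eta_step S1 S2).

End ETTC.

Section Translations.
Variables (P : eqType) (lval arity : P -> nat).

(* eta-long: variable x gives the two indices x^l = 2x and x^r = 2x+1 *)
Definition idx_l (x : var) : idx := (2 * x)%N.
Definition idx_r (x : var) : idx := (2 * x).+1.

Fixpoint long_tr (A : form P) : tform P :=
  match A with
  | Atom p args =>
      TLit p (map idx_l (take (lval p) args)) (map idx_r (drop (lval p) args))
  | Tens A B => TTensor (long_tr A) (long_tr B)
  | Par A B => TPar (long_tr A) (long_tr B)
  | All x A => TNabla (idx_r x) (idx_l x) (long_tr A)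
  | Ex x A => TTri (idx_r x) (idx_l x) (long_tr A)
  end.

Definition long_tr_seq (G : seq (form P)) : tseq P :=
  TSeq [seq delta (idx_r x) (idx_l x) | x <- fv_ctx G] (map long_tr G).

(* eta-reduced translation, defined up to the choice of the "suitable"
   (fresh, distinct) bound indices u, v: a relation *)
Inductive red_tr : form P -> tform P -> Prop :=
| red_atom p args :
    red_tr (Atom p args) (TLit p (take (lval p) args) (drop (lval p) args))
| red_tens A B A' B' :
    red_tr A A' -> red_tr B B' -> red_tr (Tens A B) (TTensor A' B')
| red_par A B A' B' :
    red_tr A A' -> red_tr B B' -> red_tr (Par A B) (TPar A' B')
| red_all x A A' u v :
    red_tr A A' -> u != v -> ~~ occurs u A' -> ~~ occurs v A' ->
    red_tr (All x A) (TNabla u v (sub_lo u x (sub_up v x A')))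
| red_ex x A A' u v :
    red_tr A A' -> u != v -> ~~ occurs u A' -> ~~ occurs v A' ->
    red_tr (Ex x A) (TTri u v (sub_lo u x (sub_up v x A'))).

Definition red_tr_seq (G : seq (form P)) (S : tseq P) : Prop :=
  tsterm S = [::] /\ Forall2 red_tr G (tsctx S).

End Translations.

From Stdlib Require Import Relations List Permutation.
From mathcomp Require Import all_boot zify.

Set Implicit Arguments.
Unset Strict Implicit.
Unset Printing Implicit Defensive.

(** In the eta-reduced translation a free variable x is a single index, used
    once upstairs (its left occurrence) and once downstairs (its right one);
    the eta-long translation uses x^l upstairs, x^r downstairs and records the
    pair in delta^{x^r}_{x^l}.  One eta-expansion per free variable, renaming
    the upper occurrence of x to a fresh x' = N + x and adding delta^x_{x'},
    turns the reduced translation into a sequent that the injective renaming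
    x' |-> x^l, x |-> x^r maps onto the long one.  Under a quantifier the bound
    indices u, v of the reduced translation play the roles of x^r and x^l; to
    follow them through the substitutions [v/x] and [u/x], alpha-equivalence
    is generalised to separate index correspondences for upper and lower
    positions ([aeq_ul]). *)

Section Substitution.
Variable P : eqType.
Implicit Types (A B : tform P) (i j k : idx).

Fixpoint swap_ul A : tform P :=
  match A with
  | TLit p up lo => TLit p lo up
  | TTensor A B => TTensor (swap_ul A) (swap_ul B)
  | TPar A B => TPar (swap_ul A) (swap_ul B)
  | TNabla u v A => TNabla u v (swap_ul A)
  | TTri u v A => TTri u v (swap_ul A)
  end.

Lemma swap_ulK : involutive swap_ul.
Proof. by elim=> //= [A -> B ->|A -> B ->|u v A ->|u v A ->]. Qed.

Lemma fup_swap_ul k A : fup k (swap_ul A) = flo k A.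
Proof. by elim: A => //= [A -> B ->|A -> B ->|u v A ->|u v A ->]. Qed.

Lemma flo_swap_ul k A : flo k (swap_ul A) = fup k A.
Proof. by rewrite -fup_swap_ul swap_ulK. Qed.

Lemma occurs_swap_ul k A : occurs k (swap_ul A) = occurs k A.
Proof. by elim: A => //= [p up lo|A -> B ->|A -> B ->|u v A ->|u v A ->]; rewrite orbC. Qed.

Lemma sub_lo_swap_ul j i A : sub_lo j i A = swap_ul (sub_up j i (swap_ul A)).
Proof.
by elim: A => //= [A -> B ->|A -> B ->|u v A ->|u v A ->] //; case: ifP; rewrite ?swap_ulK.
Qed.

Lemma count_mem_ren k j i (s : seq idx) : k != j ->
  count_mem k (map (ren j i) s) = if k == i then 0 else count_mem k s.
Proof.
move=> kj; rewrite count_map /ren; case: (k =P i) => [<-|/eqP ki].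
- rewrite -(count_pred0 s); apply: eq_count => a /=.
  by case: ifP => // _; rewrite eq_sym (negbTE kj).
- apply: eq_count => a /=; case: (a =P i) => // ->.
  by rewrite eq_sym (negbTE kj) eq_sym (negbTE ki).
Qed.

Lemma fup_sub_up k j i A : k != j ->
  fup k (sub_up j i A) = if k == i then 0 else fup k A.
Proof.
move=> kj; elim: A => [p up lo|A IHA B IHB|A IHA B IHB|u v A IHA|u v A IHA] /=.
- exact: count_mem_ren.
- by rewrite IHA IHB; case: ifP.
- by rewrite IHA IHB; case: ifP.
- case: ifP => [_|/norP[/negbTE ku /negbTE kv]]; first by rewrite if_same.
  by case: ifP => [/orP[]/eqP->|_]; rewrite ?ku ?kv.
- case: ifP => [_|/norP[/negbTE ku /negbTE kv]]; first by rewrite if_same.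
  by case: ifP => [/orP[]/eqP->|_]; rewrite ?ku ?kv.
Qed.

Lemma flo_sub_up k j i A : flo k (sub_up j i A) = flo k A.
Proof.
by elim: A => //= [A -> B ->|A -> B ->|u v A IH|u v A IH] //; case: ifP => //; case: ifP.
Qed.

Lemma fup_sub_lo k j i A : fup k (sub_lo j i A) = fup k A.
Proof. by rewrite sub_lo_swap_ul fup_swap_ul flo_sub_up flo_swap_ul. Qed.

Lemma flo_sub_lo k j i A : k != j ->
  flo k (sub_lo j i A) = if k == i then 0 else flo k A.
Proof. by move=> kj; rewrite sub_lo_swap_ul flo_swap_ul fup_sub_up // fup_swap_ul. Qed.

Lemma fup_eq0 k A : ~~ occurs k A -> fup k A = 0.
Proof.
elim: A => [p up lo|A IHA B IHB|A IHA B IHB|u v A IHA|u v A IHA] /=.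
- by case/norP=> /count_memPn.
- by case/norP=> /IHA-> /IHB->.
- by case/norP=> /IHA-> /IHB->.
- by case/norP=> _ /norP[_ /IHA->]; rewrite if_same.
- by case/norP=> _ /norP[_ /IHA->]; rewrite if_same.
Qed.

Lemma flo_eq0 k A : ~~ occurs k A -> flo k A = 0.
Proof. by rewrite -occurs_swap_ul -fup_swap_ul; apply: fup_eq0. Qed.

Lemma occurs_sub_up k j i A : occurs k (sub_up j i A) -> occurs k A || (k == j).
Proof.
elim: A => [p up lo|A IHA B IHB|A IHA B IHB|u v A IHA|u v A IHA] /=.
- case/orP=> [/mapP[a a_up ->]|->]; last by rewrite orbT.
  by rewrite /ren; case: eqP => _; rewrite ?a_up ?eqxx ?orbT.
- by case/orP=> [/IHA|/IHB] /orP[]->; rewrite ?orbT.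
- by case/orP=> [/IHA|/IHB] /orP[]->; rewrite ?orbT.
- case/or3P=> [->|->|]; rewrite ?orbT //; case: ifP => _ kA; first by rewrite kA !orbT.
  by case/IHA/orP: kA => ->; rewrite ?orbT.
- case/or3P=> [->|->|]; rewrite ?orbT //; case: ifP => _ kA; first by rewrite kA !orbT.
  by case/IHA/orP: kA => ->; rewrite ?orbT.
Qed.

Lemma occurs_sub_up_other k j i A : k != i -> occurs k A -> occurs k (sub_up j i A).
Proof.
move=> ki; elim: A => [p up lo|A IHA B IHB|A IHA B IHB|u v A IHA|u v A IHA] /=.
- case/orP=> [k_up|->]; rewrite ?orbT //.
  by apply/orP; left; apply/mapP; exists k; rewrite // /ren (negbTE ki).
- by case/orP=> [/IHA|/IHB]->; rewrite ?orbT.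
- by case/orP=> [/IHA|/IHB]->; rewrite ?orbT.
- by case/or3P=> [->|->|kA]; rewrite ?orbT //; case: ifP; rewrite ?kA ?IHA ?orbT.
- by case/or3P=> [->|->|kA]; rewrite ?orbT //; case: ifP; rewrite ?kA ?IHA ?orbT.
Qed.

Lemma occurs_sub_lo_other k j i A : k != i -> occurs k A -> occurs k (sub_lo j i A).
Proof.
move=> ki; rewrite sub_lo_swap_ul occurs_swap_ul -(occurs_swap_ul k A).
exact: occurs_sub_up_other.
Qed.

End Substitution.

Section TwoSidedAlpha.
Variable P : eqType.
Implicit Types (A B : tform P) (fu fl : idx -> idx -> bool) (i j k : idx).

Definition bind_rel u u' (f : idx -> idx -> bool) i j : bool :=
  if (u == i) && (u' == j) then true
  else if (u == i) || (u' == j) then false else f i j.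

Fixpoint aeq_ul fu fl A B : bool :=
  match A, B with
  | TLit p up lo, TLit q up' lo' => [&& p == q, all2 fu up up' & all2 fl lo lo']
  | TTensor A1 A2, TTensor B1 B2 | TPar A1 A2, TPar B1 B2 =>
      aeq_ul fu fl A1 B1 && aeq_ul fu fl A2 B2
  | TNabla u v A, TNabla u' v' B | TTri u v A, TTri u' v' B =>
      aeq_ul (bind_rel u u' (bind_rel v v' fu)) (bind_rel u u' (bind_rel v v' fl)) A B
  | _, _ => false
  end.

Lemma bind_rel_bound u u' f j : bind_rel u u' f u j = (u' == j).
Proof. by rewrite /bind_rel eqxx; case: (u' == j). Qed.

Lemma bind_rel_free u u' f i j : u != i -> bind_rel u u' f i j = (u' != j) && f i j.
Proof. by rewrite /bind_rel => /negbTE->; case: (u' == j). Qed.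

Lemma eq_bind_rel u u' f g : f =2 g -> bind_rel u u' f =2 bind_rel u u' g.
Proof. by move=> fg i j; rewrite /bind_rel fg. Qed.

Lemma eq_all2 (S T : Type) (f g : S -> T -> bool) : f =2 g -> all2 f =2 all2 g.
Proof. by move=> fg s t; elim: s t => [|a s IH] [|b t] //=; rewrite fg IH. Qed.

Lemma all2_mapl (S S' T : Type) (h : S -> S') (f : S' -> T -> bool) s t :
  all2 f (map h s) t = all2 (fun a => f (h a)) s t.
Proof. by elim: s t => [|a s IH] [|b t] //=; rewrite IH. Qed.

Lemma eq_aeq_ul fu fl fu' fl' : fu =2 fu' -> fl =2 fl' -> aeq_ul fu fl =2 aeq_ul fu' fl'.
Proof.
move=> + + A; elim: A fu fl fu' fl' => [p up lo|A1 IH1 A2 IH2|A1 IH1 A2 IH2|u v A IH|u v A IH]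
  fu fl fu' fl' eu el [q up' lo'|B1 B2|B1 B2|u' v' B|u' v' B] //=.
- by rewrite (eq_all2 eu) (eq_all2 el).
- by rewrite (IH1 _ _ _ _ eu el) (IH2 _ _ _ _ eu el).
- by rewrite (IH1 _ _ _ _ eu el) (IH2 _ _ _ _ eu el).
- by apply: IH; do 2 apply: eq_bind_rel.
- by apply: IH; do 2 apply: eq_bind_rel.
Qed.

Lemma aeqE env s A B : aeq env s A B = aeq_ul (ilookup env s) (ilookup env s) A B.
Proof.
elim: A B env => [p up lo|A1 IH1 A2 IH2|A1 IH1 A2 IH2|u v A IH|u v A IH]
  [q up' lo'|B1 B2|B1 B2|u' v' B|u' v' B] env //=.
all: by rewrite ?IH1 ?IH2 ?IH.
Qed.

Lemma aeq_ul_swap fu fl A B : aeq_ul fu fl (swap_ul A) (swap_ul B) = aeq_ul fl fu A B.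
Proof.
elim: A B fu fl => [p up lo|A1 IH1 A2 IH2|A1 IH1 A2 IH2|u v A IH|u v A IH]
  [q up' lo'|B1 B2|B1 B2|u' v' B|u' v' B] fu fl //=.
all: by rewrite ?IH1 ?IH2 ?IH // [all2 fu _ _ && _]andbC.
Qed.

Lemma bind_rel_ren_bound u u' v v' f j i : (i == u) || (i == v) ->
  bind_rel u u' (bind_rel v v' f) =2 bind_rel u u' (bind_rel v v' (fun k => f (ren j i k))).
Proof.
move=> iuv k m; have [<-|uk] := eqVneq u k; first by rewrite !bind_rel_bound.
rewrite !(bind_rel_free _ _ _ uk).
have [<-|vk] := eqVneq v k; first by rewrite !bind_rel_bound.
have ki : k != i by apply: contraTneq iuv => <-; rewrite negb_or ![k == _]eq_sym uk vk.
by rewrite !(bind_rel_free _ _ _ vk) /ren (negbTE ki).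
Qed.

Lemma bind_rel_ren_free u u' v v' f j i : j != u -> j != v -> i != u -> i != v ->
  (fun k => bind_rel u u' (bind_rel v v' f) (ren j i k))
  =2 bind_rel u u' (bind_rel v v' (fun k => f (ren j i k))).
Proof.
move=> ju jv iu iv k m; rewrite /bind_rel /ren /=; case: (k =P i) => [->|//].
by rewrite ![u == _]eq_sym ![v == _]eq_sym (negbTE ju) (negbTE jv) (negbTE iu) (negbTE iv).
Qed.

Lemma aeq_ul_sub_up j i fu fl A B : ~~ occurs j A ->
  aeq_ul fu fl (sub_up j i A) B = aeq_ul (fun k => fu (ren j i k)) fl A B.
Proof.
elim: A B fu fl => [p up lo|A1 IH1 A2 IH2|A1 IH1 A2 IH2|u v A IH|u v A IH]
  [q up' lo'|B1 B2|B1 B2|u' v' B|u' v' B] fu fl //=.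
- by rewrite all2_mapl.
- by case/norP=> jA1 jA2; rewrite IH1 // IH2.
- by case/norP=> jA1 jA2; rewrite IH1 // IH2.
- rewrite !negb_or => /and3P[ju jv jA]; case: ifP => [iuv|/norP[iu iv]].
    by apply: eq_aeq_ul => //; apply: bind_rel_ren_bound.
  by rewrite IH //; apply: eq_aeq_ul => //; apply: bind_rel_ren_free.
- rewrite !negb_or => /and3P[ju jv jA]; case: ifP => [iuv|/norP[iu iv]].
    by apply: eq_aeq_ul => //; apply: bind_rel_ren_bound.
  by rewrite IH //; apply: eq_aeq_ul => //; apply: bind_rel_ren_free.
Qed.

Lemma aeq_ul_sub_lo j i fu fl A B : ~~ occurs j A ->
  aeq_ul fu fl (sub_lo j i A) B = aeq_ul fu (fun k => fl (ren j i k)) A B.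
Proof.
rewrite -(occurs_swap_ul j) -(swap_ulK B) sub_lo_swap_ul => jA.
by rewrite aeq_ul_swap aeq_ul_sub_up // -aeq_ul_swap !swap_ulK.
Qed.

End TwoSidedAlpha.

Lemma idx_l_inj : injective idx_l.
Proof. by move=> x y; rewrite /idx_l; lia. Qed.

Lemma idx_r_inj : injective idx_r.
Proof. by move=> x y; rewrite /idx_r; lia. Qed.

Lemma idx_r_neq_l x y : idx_r x != idx_l y.
Proof. by apply/eqP; rewrite /idx_l /idx_r; lia. Qed.

Lemma all2_map_r (S T : Type) (f : S -> T -> bool) (g : S -> T) s :
  all2 f s (map g s) = all (fun x => f x (g x)) s.
Proof. by elim: s => //= a s ->. Qed.

Section ReducedTranslation.
Variables (P : eqType) (lval : P -> nat).
Implicit Types fu fl : idx -> idx -> bool.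

Lemma occurs_red_tr (A : form P) A' x : red_tr lval A A' -> x \in fv A -> occurs x A'.
Proof.
elim=> {A A'} /= [p args|A B A' B' _ IHA _ IHB|A B A' B' _ IHA _ IHB|y A A' u v _ IH _ _ _
  |y A A' u v _ IH _ _ _].
- by rewrite -{1}(cat_take_drop (lval p) args) mem_cat.
- by rewrite mem_cat => /orP[/IHA|/IHB]->; rewrite ?orbT.
- by rewrite mem_cat => /orP[/IHA|/IHB]->; rewrite ?orbT.
all: by rewrite mem_filter => /andP[xy /IH xA];
  rewrite occurs_sub_lo_other ?occurs_sub_up_other ?orbT.
Qed.

Lemma fup_red_tr (A : form P) A' x : red_tr lval A A' -> fup x A' = lcount lval x A.
Proof.
elim=> {A A'} //= [A B A' B' _ -> _ ->|A B A' B' _ -> _ ->|y A A' u v _ IH _ uA vA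
  |y A A' u v _ IH _ uA vA] //.
all: case: ifP => [/orP[]/eqP xuv|/norP[xu xv]];
  last by rewrite fup_sub_lo fup_sub_up // IH eq_sym.
all: by rewrite -IH xuv fup_eq0 ?if_same.
Qed.

Lemma flo_red_tr (A : form P) A' x : red_tr lval A A' -> flo x A' = rcount lval x A.
Proof.
elim=> {A A'} //= [A B A' B' _ -> _ ->|A B A' B' _ -> _ ->|y A A' u v _ IH _ uA vA
  |y A A' u v _ IH _ uA vA] //.
all: case: ifP => [/orP[]/eqP xuv|/norP[xu xv]];
  last by rewrite flo_sub_lo // flo_sub_up IH eq_sym.
all: by rewrite -IH xuv flo_eq0 ?if_same.
Qed.

Definition long_corr fu fl (X : seq var) : Prop :=
  {in X, forall x, fu x =1 pred1 (idx_l x) /\ fl x =1 pred1 (idx_r x)}.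

Lemma long_corr_sub fu fl (X Y : seq var) :
  {subset X <= Y} -> long_corr fu fl Y -> long_corr fu fl X.
Proof. by move=> XY corr x /XY; apply: corr. Qed.

Lemma long_corr_quant y u v fu fl (X : seq var) :
  u != v -> u \notin X -> v \notin X -> long_corr fu fl [seq x <- X | x != y] ->
  long_corr (fun k => bind_rel u (idx_r y) (bind_rel v (idx_l y) fu) (ren v y k))
            (fun k => bind_rel u (idx_r y) (bind_rel v (idx_l y) fl) (ren u y k)) X.
Proof.
move=> uv uX vX corr x xX; rewrite /ren; have [->|xy] := eqVneq x y.
  split=> m /=; last by rewrite bind_rel_bound eq_sym.
  rewrite bind_rel_free // bind_rel_bound (eq_sym (idx_l y)).
  by case: (m =P idx_l y) => [->|]; rewrite ?andbF // andbT idx_r_neq_l.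
have ux : u != x by apply: contraNneq uX => ->.
have vx : v != x by apply: contraNneq vX => ->.
have /corr[cu cl] : x \in [seq x <- X | x != y] by rewrite mem_filter xy.
split=> m; rewrite !bind_rel_free // ?cu ?cl /=.
  case: (m =P idx_l x) => [->|]; rewrite ?andbF // andbT.
  by rewrite idx_r_neq_l (inj_eq idx_l_inj) eq_sym xy.
case: (m =P idx_r x) => [->|]; rewrite ?andbF // andbT.
by rewrite (inj_eq idx_r_inj) eq_sym xy eq_sym idx_r_neq_l.
Qed.

Lemma red_tr_aeq_long (A : form P) A' fu fl :
  red_tr lval A A' -> long_corr fu fl (fv A) -> aeq_ul fu fl A' (long_tr lval A).
Proof.
move=> rA; elim: rA fu fl => {A A'} [p args|A B A' B' _ IHA _ IHB|A B A' B' _ IHA _ IHB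
  |y A A' u v rA IH uv uA vA|y A A' u v rA IH uv uA vA] fu fl corr /=.
- rewrite eqxx /= !all2_map_r; apply/andP; split; apply/allP => x x_args.
    by rewrite (corr x (mem_take x_args)).1 /= eqxx.
  by rewrite (corr x (mem_drop x_args)).2 /= eqxx.
- by rewrite IHA ?IHB //; apply: long_corr_sub corr => x x_fv; rewrite mem_cat x_fv ?orbT.
- by rewrite IHA ?IHB //; apply: long_corr_sub corr => x x_fv; rewrite mem_cat x_fv ?orbT.
all: have uA' : ~~ occurs u (sub_up v y A')
  by apply/negP => /occurs_sub_up; rewrite (negbTE uA) (negbTE uv).
all: rewrite aeq_ul_sub_lo // aeq_ul_sub_up //; apply: IH.
all: by apply: long_corr_quant; rewrite // (contraNN (occurs_red_tr rA)).
Qed.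

End ReducedTranslation.

Section EtaExpansion.
Variables (P : eqType) (N : nat).
Implicit Types (A B : tform P) (G : seq (tform P)).

Definition expand_up (l : seq idx) A : tform P := foldr (fun x B => sub_up (N + x) x B) A l.

Definition expansion (l : seq idx) G : tseq P :=
  TSeq [seq delta x (N + x) | x <- l] (map (expand_up l) G).

Lemma occurs_expand_up l A k :
  occurs k (expand_up l A) -> occurs k A || (k \in map (addn N) l).
Proof.
elim: l => [|x l IH] /=; first by move->.
by rewrite inE => /occurs_sub_up/orP[/IH/orP[]|] ->; rewrite ?orbT.
Qed.

Lemma fup_expand_up l A x : x < N -> x \notin l -> fup x (expand_up l A) = fup x A.
Proof.
move=> xN; elim: l => //= y l IH; rewrite inE negb_or => /andP[xy /IH <-].
by rewrite fup_sub_up ?(negbTE xy) //; apply/eqP; lia.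
Qed.

Lemma flo_expand_up l A x : flo x (expand_up l A) = flo x A.
Proof. by elim: l => //= y l <-; rewrite flo_sub_up. Qed.

Lemma aeq_ul_expand_up l fu fl A B :
  (forall k, occurs k A -> k < N) -> uniq l -> {in l, forall x, x < N} ->
  aeq_ul fu fl (expand_up l A) B
  = aeq_ul (fun k => fu (if k \in l then N + k else k)) fl A B.
Proof.
move=> AN; elim: l fu => [|x l IH] fu /=; first by move=> _ _; apply: eq_aeq_ul.
case/andP=> xl ul lN; have xN : x < N by apply: lN; rewrite inE eqxx.
rewrite aeq_ul_sub_up; last first.
  apply/negP => /occurs_expand_up/orP[/AN|]; first lia.
  by rewrite (mem_map (@addnI N)) (negbTE xl).
rewrite IH //; last by move=> y yl; apply: lN; rewrite inE yl orbT.
apply: eq_aeq_ul => // k m; rewrite inE /ren.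
case: (k \in l); last by rewrite orbF; case: (k =P x) => [->|].
by rewrite orbT; case: (N + k =P x) => //; lia.
Qed.

Lemma fresh_expansion l G x :
  (forall k, has (occurs k) G -> k < N) -> {in l, forall y, y < N} -> x \notin l ->
  ~~ occurs_seq (N + x) (expansion l G).
Proof.
move=> GN lN xl; rewrite /occurs_seq /= negb_or !has_map; apply/andP; split.
  apply/hasPn => y yl; rewrite /occurs_elem /= !inE eqn_add2l negb_or.
  have yN := lN y yl; apply/andP; split; first by apply/eqP; lia.
  by apply: contraNneq xl => ->.
have expand_fresh : subpred (fun A => occurs (N + x) (expand_up l A)) (occurs (N + x)).
  by move=> A /occurs_expand_up; rewrite (mem_map (@addnI N)) (negbTE xl) orbF.
by apply/negP => /(sub_has expand_fresh)/GN; lia.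
Qed.

Lemma alpha_eta_expansion l G :
  (forall k, has (occurs k) G -> k < N) -> uniq l -> {in l, forall x, x < N} ->
  {in l, forall x, 0 < fup_ctx x G} -> {in l, forall x, 0 < flo_ctx x G} ->
  alpha_eta_equiv (TSeq [::] G) (expansion l G).
Proof.
move=> GN; elim: l => [_ _ _ _|x l IH] /=.
  by rewrite /expansion /= map_id; apply: rst_refl.
case/andP=> xl ul lN lup llo; have xxl : x \in x :: l by rewrite inE eqxx.
have sub : {subset l <= x :: l} by move=> y yl; rewrite inE yl orbT.
have xN := lN x xxl.
have lN' := sub_in1 sub lN.
apply: rst_trans (IH ul lN' (sub_in1 sub lup) (sub_in1 sub llo)) _.
apply: rst_step; right.
have -> : expansion (x :: l) G = TSeq (delta x (N + x) :: [seq delta y (N + y) | y <- l])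
                                       (map (sub_up (N + x) x) (map (expand_up l) G)).
  by rewrite /expansion -map_comp.
apply: eta_up.
- rewrite /fup_ctx -map_comp (eq_map (_ : _ =1 fup x)) => [|A /=]; first exact: lup xxl.
  exact: fup_expand_up.
- rewrite /flo_ctx -map_comp (eq_map (_ : _ =1 flo x)) => [|A /=]; first exact: llo xxl.
  exact: flo_expand_up.
- exact: fresh_expansion.
Qed.

End EtaExpansion.

Section FreshBound.
Variable P : eqType.

Fixpoint idx_sum (A : tform P) : nat :=
  match A with
  | TLit _ up lo => sumn up + sumn lo
  | TTensor A B | TPar A B => idx_sum A + idx_sum B
  | TNabla u v A | TTri u v A => u + v + idx_sum A
  end.

Lemma leq_sumn k (s : seq nat) : k \in s -> k <= sumn s.
Proof. by elim: s => //= a s IH; rewrite inE => /orP[/eqP->|/IH]; lia. Qed.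

Lemma occurs_leq_idx_sum k (A : tform P) : occurs k A -> k <= idx_sum A.
Proof.
elim: A => [p up lo|A IHA B IHB|A IHA B IHB|u v A IHA|u v A IHA] /=.
- by case/orP=> /leq_sumn; lia.
- by case/orP=> [/IHA|/IHB]; lia.
- by case/orP=> [/IHA|/IHB]; lia.
- by case/or3P=> [/eqP->|/eqP->|/IHA]; lia.
- by case/or3P=> [/eqP->|/eqP->|/IHA]; lia.
Qed.

Definition ctx_bound (G : seq (tform P)) : nat := (sumn (map idx_sum G)).+1.

Lemma has_occurs_ctx_bound k (G : seq (tform P)) : has (occurs k) G -> k < ctx_bound G.
Proof.
rewrite /ctx_bound; elim: G => //= A G IH /orP[/occurs_leq_idx_sum|/IH]; lia.
Qed.

End FreshBound.

Definition long_idx (N k : idx) : idx := if N <= k then idx_l (k - N) else idx_r k.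

Lemma long_idx_inj N : injective (long_idx N).
Proof.
by move=> a b; rewrite /long_idx /idx_l /idx_r; case: (leqP N a); case: (leqP N b); lia.
Qed.

Lemma long_idx_up N x : long_idx N (N + x) = idx_l x.
Proof. by rewrite /long_idx leq_addr addKn. Qed.

Lemma long_idx_lo N x : x < N -> long_idx N x = idx_r x.
Proof. by rewrite /long_idx ltnNge => /negbTE->. Qed.

Section LongTranslation.
Variables (P : eqType) (lval : P -> nat).
Implicit Types (G : seq (form P)).

Lemma fup_ctx_red_tr G (G' : seq (tform P)) x :
  Forall2 (red_tr lval) G G' -> fup_ctx x G' = lcount_ctx lval x G.
Proof.
elim=> // A A' G1 G1' rA _; rewrite /fup_ctx /lcount_ctx /= => ->.
by rewrite (fup_red_tr x rA).
Qed.

Lemma flo_ctx_red_tr G (G' : seq (tform P)) x :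
  Forall2 (red_tr lval) G G' -> flo_ctx x G' = rcount_ctx lval x G.
Proof.
elim=> // A A' G1 G1' rA _; rewrite /flo_ctx /rcount_ctx /= => ->.
by rewrite (flo_red_tr x rA).
Qed.

Lemma has_occurs_red_tr G (G' : seq (tform P)) x :
  Forall2 (red_tr lval) G G' -> x \in flatten (map (@fv P) G) -> has (occurs x) G'.
Proof.
elim=> // A A' G1 G1' rA _ IH; rewrite /= mem_cat => /orP[/(occurs_red_tr rA)->//|/IH->].
exact: orbT.
Qed.

Lemma all2_aeq_expansion_long N L G (G' : seq (tform P)) :
  Forall2 (red_tr lval) G G' -> (forall k, has (occurs k) G' -> k < N) ->
  uniq L -> {in L, forall x, x < N} -> {subset flatten (map (@fv P) G) <= L} ->
  all2 (aeq [::] (long_idx N)) (map (expand_up N L) G') (map (long_tr lval) G).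
Proof.
move=> red GN uL LN; elim: red GN => //= A A' G1 G1' rA _ IH GN fvL.
rewrite IH => [|k kG1|x xG1]; last first.
- by apply: fvL; rewrite mem_cat xG1 orbT.
- by apply: GN; rewrite kG1 orbT.
rewrite andbT aeqE aeq_ul_expand_up // => [|k kA]; last by apply: GN; rewrite kA.
apply: red_tr_aeq_long rA _ => x xA.
have xL : x \in L by apply: fvL; rewrite mem_cat xA.
by rewrite xL; split=> m /=; rewrite ?long_idx_up ?long_idx_lo //; apply: LN.
Qed.

Lemma fv_ctx_bounded N G (G' : seq (tform P)) :
  Forall2 (red_tr lval) G G' -> (forall k, has (occurs k) G' -> k < N) ->
  {in fv_ctx G, forall x, x < N}.
Proof. by move=> red GN x; rewrite mem_undup => /(has_occurs_red_tr red)/GN. Qed.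

Lemma alpha_expansion_long N G (G' : seq (tform P)) :
  Forall2 (red_tr lval) G G' -> (forall k, has (occurs k) G' -> k < N) ->
  tseq_alpha (expansion N (fv_ctx G) G') (long_tr_seq lval G).
Proof.
move=> red GN; have LN := fv_ctx_bounded red GN.
exists (long_idx N); split; first exact: long_idx_inj.
split; last by apply: all2_aeq_expansion_long; rewrite ?undup_uniq // => x; rewrite mem_undup.
have -> : map (ren_elem (long_idx N)) [seq delta x (N + x) | x <- fv_ctx G]
          = [seq delta (idx_r x) (idx_l x) | x <- fv_ctx G].
  rewrite -map_comp; apply/eq_in_map => x /LN xN.
  by rewrite /= /ren_elem /= long_idx_up long_idx_lo.
exact: Permutation_refl.
Qed.

End LongTranslation.

Theorem proposition7p2 (P : eqType) (lval arity : P -> nat)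
  (Hval : forall p : P, (lval p <= arity p)%N)
  (G : seq (form P)) (S : tseq P) :
  ling_wf lval arity G ->
  red_tr_seq lval G S ->
  alpha_eta_equiv (long_tr_seq lval G) S.
Proof.
case: S => t G' [_ wf] [/= -> red].
set N := ctx_bound G'.
have GN : forall k, has (occurs k) G' -> k < N by move=> k; apply: has_occurs_ctx_bound.
apply: rst_trans (_ : alpha_eta_equiv _ (expansion N (fv_ctx G) G')) _.
  by apply/rst_sym/rst_step; left; apply: alpha_expansion_long.
apply/rst_sym/alpha_eta_expansion; rewrite ?undup_uniq //.
- exact: fv_ctx_bounded red GN.
- by move=> x /wf[lx _]; rewrite (fup_ctx_red_tr _ red) lx.
- by move=> x /wf[_ rx]; rewrite (flo_ctx_red_tr _ red) rx.
Qed.
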